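(* Let $\mu$ be a compactly supported Borel probability measure on $\mathbb R^n$, $\alpha\ge0$, $q,t\in\mathbb R$ and $\delta>0$ with $\delta\le\alpha q+t$. Then: (1)(a) if $q\le0$ and $A\subseteq\overline E^\alpha$ is Borel, then $\mathsf P^{\alpha q+t-\delta}(A)\ge2^{\alpha q-\delta}\,\mathsf P^{q,t}_\mu(A)$; (1)(b) if $q\ge0$ and $A\subseteq\underline E_\alpha$ is Borel, then $\mathsf P^{\alpha q+t-\delta}(A)\ge2^{\alpha q-\delta}\,\mathsf P^{q,t}_\mu(A)$; in particular, if $A\subseteq\underline E_\alpha$ is Borel with $\mu(A)>0$, then $\overline\dim_{MB}(A)\ge\alpha$; (2)(a) if $q\le0$ and $A\subseteq\overline E^\alpha$ is Borel, then $\mathsf H^{\alpha q+t-\delta}(A)\ge2^{\alpha q-\delta}\,\mathsf H^{q,t}_\mu(A)$; (2)(b) if $q\ge0$ and $A\subseteq\underline E_\alpha$ is Borel, then $\mathsf H^{\alpha q+t-\delta}(A)\ge2^{\alpha q-\delta}\,\mathsf H^{q,t}_\mu(A)$; in particular, if $A\subseteq\underline E_\alpha$ is Borel with $\mu(A)>0$, then $\underline\dim_{MB}(A)\ge\alpha$.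
   Context: $B(x,r)$ is the closed ball. Multifractal Hewitt–Stromberg measures: for $E\subseteq\mathbb R^n$, $r>0$, $q,t\in\mathbb R$, $N^q_{\mu,r}(E)=\inf\sum_i\mu(B(x_i,r))^q$ over centred coverings $(B(x_i,r))_i$ of $E$ ($x_i\in E$, $E\subseteq\bigcup_iB(x_i,r)$), $M^q_{\mu,r}(E)=\sup\sum_i\mu(B(x_i,r))^q$ over centred packings (pairwise disjoint $B(x_i,r)$, $x_i\in E$); $\mathsf L^{q,t}_\mu(E)=\liminf_{r\to0}N^q_{\mu,r}(E)(2r)^t$, $\mathsf C^{q,t}_\mu(E)=\limsup_{r\to0}M^q_{\mu,r}(E)(2r)^t$; $\overline{\mathsf H}^{q,t}_\mu(E)=\inf\{\sum_i\mathsf L^{q,t}_\mu(E_i):E\subseteq\bigcup_iE_i,E_i\text{ bounded}\}$, $\mathsf H^{q,t}_\mu(E)=\sup_{F\subseteq E}\overline{\mathsf H}^{q,t}_\mu(F)$, $\mathsf P^{q,t}_\mu(E)=\inf\{\sum_i\mathsf C^{q,t}_\mu(E_i):E\subseteq\bigcup_iE_i,E_i\text{ bounded}\}$. Hewitt–Stromberg measures: $N_r(E)$ least number of closed $r$-balls centred in $E$ covering $E$, $M_r(E)$ largest number of points of $E$ with pairwise distances $\ge r$; $\overline{\mathsf H}^s(E)=\liminf_{r\to0}N_r(E)(2r)^s$, $\overline{\mathsf P}^s(E)=\limsup_{r\to0}M_r(E)(2r)^s$, $\mathsf H^s(E)=\inf\{\sum_i\overline{\mathsf H}^s(E_i):E\subseteq\bigcup_iE_i\}$,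 $\mathsf P^s$ analogously; $\underline\dim_{MB}E=\inf\{s\ge0:\mathsf H^s(E)=0\}$, $\overline\dim_{MB}E=\inf\{s\ge0:\mathsf P^s(E)=0\}$. Local dimensions $\underline\alpha_\mu(x)=\liminf_{r\to0}\frac{\log\mu(B(x,r))}{\log r}$, $\overline\alpha_\mu(x)=\limsup_{r\to0}\frac{\log\mu(B(x,r))}{\log r}$; $\overline E^\alpha=\{x\in\operatorname{supp}\mu:\overline\alpha_\mu(x)\le\alpha\}$, $\underline E_\alpha=\{x\in\operatorname{supp}\mu:\underline\alpha_\mu(x)\ge\alpha\}$. *)

From HB Require Import structures.
From mathcomp Require Import all_boot all_order all_algebra.
From mathcomp Require Import all_classical all_reals all_analysis.
Set Implicit Arguments. Unset Strict Implicit. Unset Printing Implicit Defensive.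
Import Order.TTheory GRing.Theory Num.Theory.
Import numFieldNormedType.Exports.
Local Open Scope classical_set_scope.
Local Open Scope ring_scope.

(* The ambient space R^n is 'rV[R]_n (its canonical matrix topology is the
   Euclidean topology).  As a measurable space we equip it with the Borel
   sigma-algebra, generated by the open sets. *)
Definition Rn (R : realType) (n : nat) : Type :=
  g_sigma_algebraType (@open 'rV[R]_n).

Section Defs.
Variables (R : realType) (n : nat).
Local Notation V := 'rV[R]_n.

Definition edist (x y : V) : R :=
  Num.sqrt (\sum_(i < n) (x ord0 i - y ord0 i) ^+ 2).

Definition cball (x : V) (r : R) : set V := [set y | edist x y <= r].

Definition ebounded (E : set V) : Prop :=
  exists (x0 : V) (c : R), E `<=` cball x0 c.

Definition liminf0 (f : R -> \bar R) : \bar R :=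
  ereal_sup [set ereal_inf [set f r | r in [set r | 0 < r < e]] | e in [set e : R | 0 < e]].
Definition limsup0 (f : R -> \bar R) : \bar R :=
  ereal_inf [set ereal_sup [set f r | r in [set r | 0 < r < e]] | e in [set e : R | 0 < e]].

Definition epow (m : \bar R) (q : R) : \bar R :=
  match m with
  | EFin r => if r == 0 then (if q <= 0 then +oo%E else 0%E) else (r `^ q)%:E
  | +oo%E => if q < 0 then 0%E else +oo%E
  | -oo%E => 0%E
  end.

Variable mu : set V -> \bar R.

Definition supp : set V :=
  [set x | forall U : set V, open U -> U x -> (0 < mu U)%E].

Definition Nq (q r : R) (E : set V) : \bar R :=
  ereal_inf [set z | exists (I : set nat) (c : nat -> V),
                 [/\ (forall i, I i -> E (c i)),
                      E `<=` \bigcup_(i in I) cball (c i) r &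
                      z = \esum_(i in I) epow (mu (cball (c i) r)) q]].

Definition Mq (q r : R) (E : set V) : \bar R :=
  ereal_sup [set z | exists (I : set nat) (c : nat -> V),
                 [/\ (forall i, I i -> E (c i)),
                      (forall i j, I i -> I j -> i <> j ->
                         cball (c i) r `&` cball (c j) r = set0) &
                      z = \esum_(i in I) epow (mu (cball (c i) r)) q]].

Definition Lqt (q t : R) (E : set V) : \bar R :=
  liminf0 (fun r => (Nq q r E * ((2 * r) `^ t)%:E)%E).
Definition Cqt (q t : R) (E : set V) : \bar R :=
  limsup0 (fun r => (Mq q r E * ((2 * r) `^ t)%:E)%E).

Definition Hbarqt (q t : R) (E : set V) : \bar R :=
  ereal_inf [set (\sum_(0 <= i <oo) Lqt q t (F i))%E
            | F in [set F : nat -> set V |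
                 E `<=` \bigcup_i F i /\ forall i, ebounded (F i)]].

Definition Hqt (q t : R) (E : set V) : \bar R :=
  ereal_sup [set Hbarqt q t F | F in [set F | F `<=` E]].

Definition Pqt (q t : R) (E : set V) : \bar R :=
  ereal_inf [set (\sum_(0 <= i <oo) Cqt q t (F i))%E
            | F in [set F : nat -> set V |
                 E `<=` \bigcup_i F i /\ forall i, ebounded (F i)]].

Definition locratio (x : V) (r : R) : \bar R :=
  (ln (fine (mu (cball x r))) / ln r)%:E.

Definition lowlocdim (x : V) : \bar R := liminf0 (locratio x).
Definition uplocdim (x : V) : \bar R := limsup0 (locratio x).

Definition Eup (a : R) : set V := [set x | supp x /\ (uplocdim x <= a%:E)%E].
Definition Elow (a : R) : set V := [set x | supp x /\ (a%:E <= lowlocdim x)%E].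

End Defs.

Section HS.
Variables (R : realType) (n : nat).
Local Notation V := 'rV[R]_n.

Definition Nr (r : R) (E : set V) : \bar R :=
  ereal_inf [set (size s)%:R%:E | s in [set s : seq V |
      (forall x, x \in s -> E x) /\ E `<=` [set y | exists2 x, x \in s & cball x r y]]].

Definition Mr (r : R) (E : set V) : \bar R :=
  ereal_sup [set (size s)%:R%:E | s in [set s : seq V | uniq s /\
      (forall x, x \in s -> E x) /\
      (forall x y, x \in s -> y \in s -> x != y -> r <= edist x y)]].

Definition HSbar (s : R) (E : set V) : \bar R :=
  liminf0 (fun r => (Nr r E * ((2 * r) `^ s)%:E)%E).
Definition PSbar (s : R) (E : set V) : \bar R :=
  limsup0 (fun r => (Mr r E * ((2 * r) `^ s)%:E)%E).

Definition HS (s : R) (E : set V) : \bar R :=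
  ereal_inf [set (\sum_(0 <= i <oo) HSbar s (F i))%E
            | F in [set F : nat -> set V | E `<=` \bigcup_i F i]].
Definition PS (s : R) (E : set V) : \bar R :=
  ereal_inf [set (\sum_(0 <= i <oo) PSbar s (F i))%E
            | F in [set F : nat -> set V | E `<=` \bigcup_i F i]].

Definition lowdimMB (E : set V) : \bar R :=
  ereal_inf [set s%:E | s in [set s : R | 0 <= s /\ HS s E = 0%E]].
Definition updimMB (E : set V) : \bar R :=
  ereal_inf [set s%:E | s in [set s : R | 0 <= s /\ PS s E = 0%E]].

End HS.

From Pilot Require Import Defs.
From HB Require Import structures.
From mathcomp Require Import all_boot all_order all_algebra.
From mathcomp Require Import all_classical all_reals all_analysis.
From mathcomp Require Import finmap ring lra.
Import Order.TTheory GRing.Theory Num.Theory.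
Import numFieldNormedType.Exports.
Local Open Scope classical_set_scope.
Local Open Scope ring_scope.
Set Implicit Arguments. Unset Strict Implicit.

(* Near a point of [Eup alpha] (for q <= 0) or of [Elow alpha] (for q >= 0) one has
   mu(B(y, r))^q <= r^((alpha +- eta) q) for all small r, and eta can be chosen so small
   that this exponent exceeds s := alpha q + t - delta.  On a set F with finite
   Hewitt-Stromberg quantity of exponent s the r-covering and r-packing numbers are
   O(r^-s), so the multifractal sums at scale r of any part of F where the mass bound
   holds are O(r^((alpha +- eta) q + t - s)) and tend to 0.  The same estimate with q = 1 shows that mu(A) = 0 when HS^s(A) = 0 and
   s < alpha, which gives the dimension bounds. *)

Lemma sqr_sum_mul_le (R : realFieldType) (I : finType) (a b : I -> R) :
  (\sum_i a i * b i) ^+ 2 <= (\sum_i a i ^+ 2) * (\sum_i b i ^+ 2).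
Proof.
set A := \sum_i a i ^+ 2; set B := \sum_i b i ^+ 2; set P := \sum_i a i * b i.
have B_ge0 : 0 <= B by rewrite sumr_ge0// => i _; rewrite sqr_ge0.
have [B0|B_neq0] := eqVneq B 0.
  have b0 i : b i = 0.
    by apply/eqP; rewrite -sqrf_eq0; apply/eqP/(psumr_eq0P _ B0) => // j _; rewrite sqr_ge0.
  by rewrite /P big1 ?expr0n ?mulr_ge0 ?sumr_ge0// => i _; rewrite ?b0 ?mulr0 ?sqr_ge0.
have expand c d : \sum_i (c * a i - d * b i) ^+ 2 = c ^+ 2 * A - 2 * c * d * P + d ^+ 2 * B.
  rewrite /A /B /P !mulr_sumr -sumrB -big_split /=.
  by apply: eq_bigr => i _; ring.
(* the discriminant argument, for [a - (P / B) b] scaled by [B] *)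
have key : \sum_i (B * a i - P * b i) ^+ 2 = B * (A * B - P ^+ 2).
  by rewrite expand; ring.
have : 0 <= B * (A * B - P ^+ 2) by rewrite -key sumr_ge0// => i _; rewrite sqr_ge0.
by rewrite pmulr_rge0 ?subr_ge0// lt_neqAle eq_sym B_neq0.
Qed.

Section EuclideanDistance.
Variables (R : realType) (n : nat).
Local Notation V := 'rV[R]_n.
Local Notation edist := (@Defs.edist R n).

Lemma sqr_edist (x y : V) : edist x y ^+ 2 = \sum_i (x ord0 i - y ord0 i) ^+ 2.
Proof. by rewrite sqr_sqrtr// sumr_ge0// => i _; rewrite sqr_ge0. Qed.

Lemma edist_ge0 (x y : V) : 0 <= edist x y. Proof. exact: sqrtr_ge0. Qed.

Lemma edistC (x y : V) : edist x y = edist y x.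
Proof. by congr Num.sqrt; apply: eq_bigr => i _; rewrite -sqrrN opprB. Qed.

Lemma edistxx (x : V) : edist x x = 0.
Proof. by rewrite /Defs.edist big1 ?sqrtr0// => i _; rewrite subrr expr0n. Qed.

Lemma edist_triangle (x y z : V) : edist x z <= edist x y + edist y z.
Proof.
rewrite -(ler_pXn2r (isT : 0 < 2)%N) ?nnegrE ?addr_ge0 ?edist_ge0//.
set u := fun i => x ord0 i - y ord0 i; set v := fun i => y ord0 i - z ord0 i.
have uv_le : \sum_i u i * v i <= edist x y * edist y z.
  apply: le_trans (ler_norm _) _.
  rewrite -sqrtr_sqr -sqrtrM ?sumr_ge0// => [|i _]; last by rewrite sqr_ge0.
  rewrite ler_sqrt ?mulr_ge0 ?sumr_ge0// => [|i _|i _]; rewrite ?sqr_ge0//.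
  exact: sqr_sum_mul_le.
rewrite !sqr_edist sqrrD !sqr_edist.
have -> : \sum_i (x ord0 i - z ord0 i) ^+ 2
    = \sum_i u i ^+ 2 + \sum_i v i ^+ 2 + 2 * \sum_i u i * v i.
  by rewrite mulr_sumr -!big_split /=; apply: eq_bigr => i _; rewrite /u /v; ring.
lra.
Qed.

Lemma edist_midpoint (x y : V) : edist x (2^-1 *: (x + y)) = edist x y / 2.
Proof.
rewrite -[RHS]ger0_norm ?divr_ge0 ?edist_ge0// -sqrtr_sqr; congr Num.sqrt.
rewrite expr_div_n sqr_edist mulr_suml; apply: eq_bigr => i _; by rewrite !mxE; field.
Qed.

Lemma disjoint_cball_edist (x y : V) (r : R) :
  cball x r `&` cball y r = set0 -> 2 * r < edist x y.
Proof.
move=> disj; rewrite ltNge; apply/negP => le_xy.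
suff : (cball x r `&` cball y r) (2^-1 *: (x + y)) by rewrite disj.
have mid_r : edist y (2^-1 *: (x + y)) = edist x y / 2.
  by rewrite addrC edist_midpoint edistC.
by split; rewrite /cball /= ?edist_midpoint ?mid_r; lra.
Qed.

(* [ball] is the ball of the sup norm of ['rV[R]_n]. *)
Lemma edist_ball (x y : V) (e : R) : ball x e y -> edist x y <= n.+1%:R * e.
Proof.
move=> [e_gt0 xy_e].
have e_ge0 : 0 <= e := ltW e_gt0.
rewrite -(ler_pXn2r (isT : 0 < 2)%N) ?nnegrE ?mulr_ge0 ?edist_ge0// sqr_edist.
apply: (@le_trans _ _ (\sum_(i < n) e ^+ 2)).
  apply: ler_sum => i _; rewrite -real_normK ?num_real// lerXn2r ?nnegrE//.
  exact: ltW (xy_e ord0 i).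
rewrite sumr_const card_ord -[_ *+ n]mulr_natl exprMn ler_wpM2r ?sqr_ge0// -natrX ler_nat.
by rewrite (leq_trans (leqnSn n))// expnS expn1 leq_pmulr.
Qed.
End EuclideanDistance.

Section RealAuxiliaries.
Variable R : realType.

Lemma powR_decay (C a b s beta t eps : R) :
  0 < C -> 0 < a -> 0 < b -> 0 < beta + t - s -> 0 < eps ->
  exists2 th, 0 < th &
    forall x, 0 < x < th -> C / (a * x) `^ s * x `^ beta * (b * x) `^ t <= eps.
Proof.
move=> C_gt0 a_gt0 b_gt0 g_gt0 eps_gt0; set g := beta + t - s in g_gt0 *.
set K := C * (a `^ (- s) * b `^ t).
have K_gt0 : 0 < K by rewrite !mulr_gt0 ?powR_gt0.
exists (expR (g^-1 * ln (eps / K))) => [|x /andP[x_gt0 x_lt]]; first exact: expR_gt0.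
have -> : C / (a * x) `^ s * x `^ beta * (b * x) `^ t = K * x `^ g.
  rewrite /K /g /powR !gt_eqF ?mulr_gt0// !lnM ?posrE// -expRN -!mulrA -!expRD.
  by congr (C * expR _); ring.
rewrite mulrC -ler_pdivlMr// -[eps / K]lnK ?posrE ?divr_gt0// /powR gt_eqF// ler_expR.
have : ln x < g^-1 * ln (eps / K) by rewrite -[ltRHS]expRK ltr_ln ?posrE ?expR_gt0.
by rewrite -(ltr_pM2l g_gt0) mulrA mulfV ?gt_eqF// mul1r mulrC => /ltW.
Qed.

Lemma epow_ge0 (m : \bar R) (q : R) : (0 <= epow m q)%E.
Proof. by case: m => [r| |] /=; repeat case: ifP; rewrite ?lee_fin ?powR_ge0. Qed.

Lemma epow_le_powR (m r q beta : R) : 0 < m -> 0 < r ->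
  q * ln m <= beta * ln r -> (epow m%:E q <= (r `^ beta)%:E)%E.
Proof. by move=> m_gt0 r_gt0; rewrite /epow gt_eqF// lee_fin /powR !gt_eqF// ler_expR. Qed.

Lemma epow1 (m : R) : 0 <= m -> epow m%:E 1 = m%:E.
Proof.
by rewrite /epow ler10; case: eqP => [->|_] m_ge0; rewrite ?powRr1.
Qed.

Lemma lt_pinfty_bound (x : \bar R) : (x < +oo)%E -> exists2 C : R, 0 < C & (x < C%:E)%E.
Proof.
case: x => [r| |] // _; last by exists 1; rewrite ?ltNyr.
by exists (`|r| + 1); rewrite ?lte_fin ?ltr_pwDr//; have := ler_norm r; lra.
Qed.

Implicit Types (f g : R -> \bar R) (x : \bar R).

Lemma limsup0_le f x (e : R) : 0 < e -> (forall r, 0 < r < e -> (f r <= x)%E) ->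
  (limsup0 f <= x)%E.
Proof.
move=> e_gt0 fx; apply: ge_ereal_inf; exists (ereal_sup [set f r | r in [set r | (0 < r < e)%R]]).
  by exists e.
by apply: ge_ereal_sup => _ [r re <-]; exact: fx.
Qed.

Lemma liminf0_le f x : (forall e, 0 < e -> exists2 r, 0 < r < e & (f r <= x)%E) ->
  (liminf0 f <= x)%E.
Proof.
move=> fx; apply: ge_ereal_sup => _ [e e_gt0 <-]; have [r re frx] := fx e e_gt0.
by apply: le_trans frx; apply: ereal_inf_lbound; exists r.
Qed.

Lemma limsup0_lt f x : (limsup0 f < x)%E ->
  exists2 e, 0 < e & forall r, 0 < r < e -> (f r < x)%E.
Proof.
move=> /ereal_inf_lt[_ [e e_gt0 <-]] sup_lt; exists e => // r re.
by apply: le_lt_trans sup_lt; apply: ereal_sup_ubound; exists r.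
Qed.

Lemma lt_liminf0 f x : (x < liminf0 f)%E ->
  exists2 e, 0 < e & forall r, 0 < r < e -> (x < f r)%E.
Proof.
move=> /ereal_sup_gt[_ [e e_gt0 <-]] lt_inf; exists e => // r re.
by apply: lt_le_trans lt_inf _; apply: ereal_inf_lbound; exists r.
Qed.

Lemma liminf0_lt f x : (liminf0 f < x)%E ->
  forall e, 0 < e -> exists2 r, 0 < r < e & (f r < x)%E.
Proof.
move=> inf_lt e e_gt0.
have : (ereal_inf [set f r | r in [set r | (0 < r < e)%R]] < x)%E.
  by apply: le_lt_trans inf_lt; apply: ereal_sup_ubound; exists e.
by move=> /ereal_inf_lt[_ [r re <-]]; exists r.
Qed.

Lemma liminf0_ge f x : (forall r, 0 < r -> (x <= f r)%E) -> (x <= liminf0 f)%E.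
Proof.
move=> xf; apply: (@le_trans _ _ (ereal_inf [set f r | r in [set r | (0 < r < 1)%R]])).
  by apply: le_ereal_inf_tmp => _ [r /andP[r_gt0 _] <-]; exact: xf.
by apply: ereal_sup_ubound; exists 1 => //; exact: ltr01.
Qed.

Lemma liminf0_le_limsup0 f g : (forall r, 0 < r -> (f r <= g r)%E) ->
  (liminf0 f <= limsup0 g)%E.
Proof.
move=> fg; apply: ge_ereal_sup => _ [e e_gt0 <-]; apply: le_ereal_inf_tmp => _ [e' e'_gt0 <-].
pose r := Num.min e e' / 2.
have m_gt0 : 0 < Num.min e e' by rewrite lt_min e_gt0 e'_gt0.
have m_le_e : Num.min e e' <= e by rewrite ge_min lexx.
have m_le_e' : Num.min e e' <= e' by rewrite ge_min lexx orbT.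
have r_gt0 : 0 < r by rewrite divr_gt0.
apply: (@le_trans _ _ (f r)); last apply: le_trans (fg r r_gt0) _.
  by apply: ereal_inf_lbound; exists r => //; apply/andP; split => //; rewrite /r; lra.
by apply: ereal_sup_ubound; exists r => //; apply/andP; split => //; rewrite /r; lra.
Qed.

Lemma limsup0_ge f x : (forall r, 0 < r -> (x <= f r)%E) -> (x <= limsup0 f)%E.
Proof. by move=> xf; apply: le_trans (liminf0_ge xf) (liminf0_le_limsup0 _). Qed.

Lemma term_le_nneseries (u : nat -> \bar R) i :
  (forall k, (0 <= u k)%E) -> (u i <= \sum_(0 <= k <oo) u k)%E.
Proof.
move=> u_ge0; apply: le_trans (nneseries_lim_ge i.+1 (fun k _ _ => u_ge0 k)).
by rewrite big_nat_recr//= leeDr// sume_ge0.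
Qed.
End RealAuxiliaries.

Lemma fsbig_le_card (R : realType) (T : choiceType) (X : set T) (a : T -> \bar R) (b : R) :
  finite_set X -> (forall i, X i -> (a i <= b%:E)%E) ->
  (\sum_(i \in X) a i <= ((#|` fset_set X|)%:R * b)%:E)%E.
Proof.
move=> finX ab; apply: (le_trans (lee_fsum finX ab)).
by rewrite fsumEFin// fsbig_finite//= big_const_seq count_predT iter_addr_0 mulr_natl.
Qed.

Lemma esum_le_card_mul (R : realType) (T : choiceType) (I : set T) (a : T -> \bar R)
    (b : R) (M : \bar R) :
  0 <= b -> (forall i, I i -> (a i <= b%:E)%E) ->
  (forall X, finite_set X -> X `<=` I -> ((#|` fset_set X|)%:R%:E <= M)%E) ->
  (\esum_(i in I) a i <= M * b%:E)%E.
Proof.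
move=> b_ge0 ab cardM; apply: ge_ereal_sup => _ [X [finX XI] <-].
apply: le_trans (fsbig_le_card finX (fun i Xi => ab i (XI i Xi))) _.
by rewrite EFinM lee_wpmul2r ?lee_fin// cardM.
Qed.

Lemma small_covers_negligible d (T : measurableType d) (R : realType)
    (mu : {measure set T -> \bar R}) (G : set T) :
  (forall eps : R, 0 < eps -> exists U, [/\ measurable U, G `<=` U & (mu U <= eps%:E)%E]) ->
  mu.-negligible G.
Proof.
move=> small.
have /choice[U UP] (k : nat) : exists U,
    [/\ measurable U, G `<=` U & (mu U <= (k.+1%:R^-1)%:E)%E] by apply: small; rewrite invr_gt0.
have mU k : measurable (U k) by case: (UP k).
exists (\bigcap_k U k); split; first exact: bigcapT_measurable; last first.
  by move=> x Gx k _; case: (UP k) => _ /(_ x Gx).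
apply/eqP; rewrite eq_le measure_ge0 andbT; apply/lee_addgt0Pr => e e_gt0; rewrite add0e.
have [_ _ Uk_le] := UP (Num.trunc e^-1); apply: le_trans (le_trans _ Uk_le) _.
  apply: le_measure; last by move=> x; apply.
    by apply/mem_set; exact: bigcapT_measurable.
  by apply/mem_set; exact: mU.
rewrite lee_fin ltW// invf_plt ?posrE//; exact: truncnS_gt.
Qed.

Section BallMeasure.
Variables (R : realType) (n : nat) (mu : probability (Rn R n) R).
Local Notation V := 'rV[R]_n.
Local Notation edist := (@Defs.edist R n).
Local Notation mu' := (mu : set V -> \bar R).

Lemma measurable_open (U : set V) : open U -> measurable (U : set (Rn R n)).
Proof. exact: sub_gen_smallest. Qed.

Lemma measurable_cball (y : V) (r : R) : measurable (cball y r : set (Rn R n)).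
Proof.
have -> : cball y r = ~` [set w | r < edist y w].
  by apply/seteqP; split => w /=; rewrite /cball /= leNgt => /negP.
apply: measurableC; apply: measurable_open; rewrite openE => z /= r_lt.
rewrite /interior nbhs_ballP; exists ((edist y z - r) / 2 / n.+1%:R).
  by rewrite /= !divr_gt0// subr_gt0.
move=> w /edist_ball; rewrite mulrC divfK// => zw.
have := edist_triangle y w z; rewrite (edistC w z) /=; lra.
Qed.

Lemma mu_cballE (y : V) (r : R) : mu' (cball y r) = (fine (mu' (cball y r)))%:E.
Proof.
by rewrite fineK// ge0_fin_numE ?measure_ge0// (le_lt_trans (probability_le1 _ _))// ?ltry//;
  exact: measurable_cball.
Qed.

Lemma fine_mu_cball_ge0 (y : V) (r : R) : 0 <= fine (mu' (cball y r)).
Proof. by rewrite -lee_fin -mu_cballE measure_ge0. Qed.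

Lemma supp_mu_cball_gt0 (y : V) (r : R) :
  supp mu' y -> 0 < r -> 0 < fine (mu' (cball y r)).
Proof.
move=> supp_y r_gt0; rewrite -lte_fin -mu_cballE.
have ball_gt0 : (0 < mu' (ball y (r / n.+1%:R)))%E.
  by apply: supp_y; [exact: ball_open | exact: ballxx (divr_gt0 r_gt0 _)].
apply: (lt_le_trans ball_gt0).
apply: le_measure; last by move=> w /edist_ball; rewrite mulrC divfK.
  by apply/mem_set; apply: measurable_open; exact: ball_open.
by apply/mem_set; exact: measurable_cball.
Qed.
End BallMeasure.

Section LocalDimension.
Variables (R : realType) (n : nat) (mu : probability (Rn R n) R).
Local Notation V := 'rV[R]_n.
Local Notation mu' := (mu : set V -> \bar R).

Definition mass_bound (q beta rho : R) (y : V) : Prop :=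
  forall r, 0 < r < rho -> (epow (mu' (cball y r)) q <= (r `^ beta)%:E)%E.

Lemma Eup_mass_bound (q a eta : R) (x : V) : q <= 0 -> 0 < eta -> Eup mu' a x ->
  exists2 rho, 0 < rho & mass_bound q ((a + eta) * q) rho x.
Proof.
move=> q_le0 eta_gt0 [supp_x up_le].
have [|e e_gt0 ratio_lt] := @limsup0_lt _ _ (a + eta)%:E (le_lt_trans up_le _).
  by rewrite lte_fin ltrDl.
exists (Num.min e 1) => [|r /andP[r_gt0]]; first by rewrite lt_min e_gt0 ltr01.
rewrite lt_min => /andP[r_lt_e r_lt1].
have ln_r_lt0 : ln r < 0 by rewrite ln_lt0// r_gt0.
have := ratio_lt r; rewrite r_gt0 r_lt_e lte_fin ltr_ndivrMr// => /(_ isT) lt_ln.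
rewrite mu_cballE; apply: epow_le_powR; rewrite ?supp_mu_cball_gt0//; nra.
Qed.

Lemma Elow_mass_bound (q a eta : R) (x : V) : 0 <= q -> 0 < eta -> Elow mu' a x ->
  exists2 rho, 0 < rho & mass_bound q ((a - eta) * q) rho x.
Proof.
move=> q_ge0 eta_gt0 [supp_x low_ge].
have [|e e_gt0 lt_ratio] := @lt_liminf0 _ _ (a - eta)%:E (lt_le_trans _ low_ge).
  by rewrite lte_fin gtrDl oppr_lt0.
exists (Num.min e 1) => [|r /andP[r_gt0]]; first by rewrite lt_min e_gt0 ltr01.
rewrite lt_min => /andP[r_lt_e r_lt1].
have ln_r_lt0 : ln r < 0 by rewrite ln_lt0// r_gt0.
have := lt_ratio r; rewrite r_gt0 r_lt_e lte_fin ltr_ndivlMr// => /(_ isT) ln_lt.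
rewrite mu_cballE; apply: epow_le_powR; rewrite ?supp_mu_cball_gt0//; nra.
Qed.

Lemma mass_bound_cover (q beta : R) (A : set V) :
  (forall x, A x -> exists2 rho, 0 < rho & mass_bound q beta rho x) ->
  A `<=` \bigcup_k [set y | mass_bound q beta (k.+1%:R)^-1 y].
Proof.
move=> mbA x /mbA[rho rho_gt0 mb_x]; exists (Num.trunc rho^-1) => // r /andP[r_gt0 r_lt].
apply: mb_x; rewrite r_gt0 (lt_trans r_lt)// -[ltRHS]invrK ltf_pV2 ?posrE ?invr_gt0//.
exact: truncnS_gt.
Qed.
End LocalDimension.

Section CoversAndPackings.
Variables (R : realType) (n : nat).
Local Notation V := 'rV[R]_n.
Local Notation edist := (@Defs.edist R n).

Definition centred_cover (r : R) (E : set V) (s : seq V) : Prop :=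
  (forall x, x \in s -> E x) /\ E `<=` [set y | exists2 x, x \in s & cball x r y].

Definition separated (r : R) (E : set V) (s : seq V) : Prop :=
  uniq s /\ (forall x, x \in s -> E x) /\
  (forall x y, x \in s -> y \in s -> x != y -> r <= edist x y).

(* Recentring at a point of [G] inside each ball doubles the radius. *)
Lemma recentred_cover (F G : set V) (r : R) (s : seq V) :
  G `<=` F -> centred_cover r F s ->
  exists (I : set nat) (c : nat -> V),
   [/\ forall i, I i -> G (c i), G `<=` \bigcup_(i in I) cball (c i) (2 * r)
     & I `<=` `I_(size s)].
Proof.
move=> GF [_ Fs]; pose P i := [set y | G y /\ cball (nth 0 s i) r y].
exists [set i | (i < size s)%N /\ exists y, P i y], (fun i => xget 0 (P i)); split.
- by move=> i [_ [y Py]]; have [] := xgetI 0 Py.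
- move=> z Gz; have [x xs xz] := Fs z (GF z Gz).
  have Pz : P (index x s) z by split; rewrite /= ?nth_index.
  exists (index x s); first by split; [rewrite index_mem | exists z].
  have [_] := xgetI 0 Pz; rewrite /cball /= (nth_index 0 xs) in xz * => x_c.
  have := edist_triangle (xget 0 (P (index x s))) x z; rewrite edistC in x_c; lra.
- by move=> i [].
Qed.

Lemma packing_card_le_Mr (E : set V) (r : R) (I : set nat) (c : nat -> V) (X : set nat) :
  0 <= r -> (forall i, I i -> E (c i)) ->
  (forall i j, I i -> I j -> i <> j -> cball (c i) r `&` cball (c j) r = set0) ->
  finite_set X -> X `<=` I -> (((#|` fset_set X|)%:R)%:E <= Mr r E)%E.
Proof.
move=> r_ge0 cE disj finX XI.
have memX i : i \in fset_set X -> I i by rewrite in_fset_set// => /set_mem/XI.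
have far i j : i \in fset_set X -> j \in fset_set X -> i != j -> 2 * r < edist (c i) (c j).
  by move=> /memX Ii /memX Ij /eqP ij; exact: disjoint_cball_edist (disj i j Ii Ij ij).
apply: ereal_sup_ubound; exists [seq c i | i <- fset_set X]; last by rewrite size_map.
split.
  rewrite map_inj_in_uniq ?fset_uniq// => i j Xi Xj cij; apply/eqP; apply: contraT => ij.
  by have := far i j Xi Xj ij; rewrite cij edistxx; lra.
split => [_ /mapP[i /memX Ii ->]|_ _ /mapP[i Xi ->] /mapP[j Xj ->] cij]; first exact: cE.
by have := far i j Xi Xj (contra_neq (@congr1 _ _ c i j) cij); lra.
Qed.
Lemma maximal_separated_cover (r : R) (E : set V) (s : seq V) : 0 <= r ->
  separated r E s -> (forall s', separated r E s' -> (size s' <= size s)%N) ->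
  centred_cover r E s.
Proof.
move=> r_ge0 [uniq_s [sE sep_s]] max_s; split => // z Ez; apply: contrapT => z_far.
have far x : x \in s -> r < edist x z.
  by move=> xs; rewrite ltNge; apply/negP => xz; apply: z_far; exists x.
have z_notin : z \notin s by apply/negP => /far; rewrite edistxx; lra.
suff /max_s : separated r E (z :: s) by rewrite /= ltnn.
split; first by rewrite /= z_notin uniq_s.
split => [x|x y]; first by rewrite inE => /predU1P[->|/sE].
rewrite !inE => /predU1P[->|xs] /predU1P[->|ys]; rewrite ?eqxx// => xy.
- by rewrite edistC ltW// far.
- by rewrite ltW// far.
- exact: sep_s.
Qed.

Lemma Nr_le_Mr (r : R) (E : set V) : 0 <= r -> (Nr r E <= Mr r E)%E.
Proof.
move=> r_ge0; have [->|Mr_fin] := eqVneq (Mr r E) +oo%E; first exact: leey.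
have Mr_ge0 : (0 <= Mr r E)%E by apply: ereal_sup_ubound; exists [::].
set M := fine (Mr r E).
have size_lt s : separated r E s -> (size s <= Num.trunc M)%N.
  move=> sep_s; rewrite -ltnS -(ltr_nat R); apply: le_lt_trans (truncnS_gt M).
  by rewrite -lee_fin /M fineK ?ge0_fin_numE ?ltey//; apply: ereal_sup_ubound; exists s.
pose P k := `[< exists2 s, separated r E s & size s = k >].
have P0 : exists k, P k by exists 0%N; apply/asboolP; exists [::].
have P_le k : P k -> (k <= Num.trunc M)%N by move=> /asboolP[s /size_lt ? <-].
case: (ex_maxnP P0 P_le) => _ /asboolP[s sep_s <-] max_s.
apply: (@le_trans _ _ (size s)%:R%:E); last by apply: ereal_sup_ubound; exists s.
apply: ereal_inf_lbound; exists s => //; apply: maximal_separated_cover => // s' sep_s'.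
by apply: max_s; apply/asboolP; exists s'.
Qed.

End CoversAndPackings.

Section Nonnegativity.
Variables (R : realType) (n : nat) (mu : set 'rV[R]_n -> \bar R).
Implicit Types (E : set 'rV[R]_n) (q t s r : R).

Lemma Nq_ge0 q r E : (0 <= Nq mu q r E)%E.
Proof.
by apply: le_ereal_inf_tmp => _ [I [c [_ _ ->]]]; exact: esum_ge0 (fun i _ => epow_ge0 _ _).
Qed.

Lemma Mq_ge0 q r E : (0 <= Mq mu q r E)%E.
Proof. by apply: ereal_sup_ubound; exists set0, (fun=> 0); rewrite esum_set0. Qed.

Lemma Lqt_ge0 q t E : (0 <= Lqt mu q t E)%E.
Proof. by apply: liminf0_ge => r _; rewrite mule_ge0 ?Nq_ge0// lee_fin powR_ge0. Qed.

Lemma Cqt_ge0 q t E : (0 <= Cqt mu q t E)%E.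
Proof. by apply: limsup0_ge => r _; rewrite mule_ge0 ?Mq_ge0// lee_fin powR_ge0. Qed.

Lemma Hbarqt_ge0 q t E : (0 <= Hbarqt mu q t E)%E.
Proof.
by apply: le_ereal_inf_tmp => _ [F _ <-]; apply: nneseries_ge0 => k _ _; exact: Lqt_ge0.
Qed.

Lemma Hqt_ge0 q t E : (0 <= Hqt mu q t E)%E.
Proof. by apply: le_trans (Hbarqt_ge0 q t E) _; apply: ereal_sup_ubound; exists E. Qed.

Lemma Pqt_ge0 q t E : (0 <= Pqt mu q t E)%E.
Proof.
by apply: le_ereal_inf_tmp => _ [F _ <-]; apply: nneseries_ge0 => k _ _; exact: Cqt_ge0.
Qed.

Lemma HSbar_ge0 s E : (0 <= HSbar s E)%E.
Proof.
apply: liminf0_ge => r _; rewrite mule_ge0 ?lee_fin ?powR_ge0//.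
by apply: le_ereal_inf_tmp => _ [sq _ <-]; rewrite lee_fin.
Qed.

Lemma PSbar_ge0 s E : (0 <= PSbar s E)%E.
Proof.
apply: limsup0_ge => r _; rewrite mule_ge0 ?lee_fin ?powR_ge0//.
by apply: ereal_sup_ubound; exists [::].
Qed.

Lemma HS_ge0 s E : (0 <= HS s E)%E.
Proof.
by apply: le_ereal_inf_tmp => _ [F _ <-]; apply: nneseries_ge0 => k _ _; exact: HSbar_ge0.
Qed.

Lemma PS_ge0 s E : (0 <= PS s E)%E.
Proof.
by apply: le_ereal_inf_tmp => _ [F _ <-]; apply: nneseries_ge0 => k _ _; exact: PSbar_ge0.
Qed.
End Nonnegativity.

Section CountingBounds.
Variables (R : realType) (n : nat) (mu : probability (Rn R n) R).
Local Notation V := 'rV[R]_n.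
Local Notation mu' := (mu : set V -> \bar R).

Lemma Mq_le_Mr (q r b : R) (F G : set V) : 0 <= r -> 0 <= b -> G `<=` F ->
  (forall y, G y -> (epow (mu' (cball y r)) q <= b%:E)%E) ->
  (Mq mu' q r G <= Mr r F * b%:E)%E.
Proof.
move=> r_ge0 b_ge0 GF Gb; apply: ge_ereal_sup => _ [I [c [cG disj ->]]].
apply: esum_le_card_mul => // [i Ii|X finX XI]; first exact/Gb/cG.
by apply: packing_card_le_Mr disj finX XI => // i Ii; exact/GF/cG.
Qed.

Lemma Nq_le_cover (q r b : R) (F G : set V) (s : seq V) : 0 <= b -> G `<=` F ->
  centred_cover r F s -> (forall y, G y -> (epow (mu' (cball y (2 * r))) q <= b%:E)%E) ->
  (Nq mu' q (2 * r) G <= ((size s)%:R * b)%:E)%E.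
Proof.
move=> b_ge0 GF Fs Gb; have [I [c [cG Gcov Is]]] := recentred_cover GF Fs.
apply: (@le_trans _ _ (\esum_(i in I) epow (mu' (cball (c i) (2 * r))) q)).
  by apply: ereal_inf_lbound; exists I, c.
rewrite EFinM; apply: esum_le_card_mul => // [i Ii|X _ XI]; first exact/Gb/cG.
by rewrite lee_fin ler_nat; apply/geq_card_fset_set/subset_card_le; exact: subset_trans XI Is.
Qed.

Lemma mu_cover_le (r b : R) (F G : set V) (s : seq V) : 0 <= b -> G `<=` F ->
  centred_cover r F s -> (forall y, G y -> (mu' (cball y (2 * r)) <= b%:E)%E) ->
  exists U : set V,
    [/\ measurable (U : set (Rn R n)), G `<=` U & (mu' U <= ((size s)%:R * b)%:E)%E].
Proof.
move=> b_ge0 GF Fs Gb; have [I [c [cG Gcov Is]]] := recentred_cover GF Fs.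
have finI : finite_set I := sub_finite_set Is (finite_II _).
have mB i : I i -> measurable (cball (c i) (2 * r) : set (Rn R n)).
  by move=> _; exact: measurable_cball.
have mU := bigcup_measurable mB.
exists (\bigcup_(i in I) cball (c i) (2 * r)); split => //.
apply: le_trans (content_sub_fsum mu finI mB mU (fun _ => id)) _.
apply: le_trans (fsbig_le_card finI (fun i Ii => Gb _ (cG i Ii))) _.
by rewrite lee_fin ler_wpM2r// ler_nat; apply/geq_card_fset_set/subset_card_le.
Qed.

Lemma HSbar_lt_cover (s C : R) (F : set V) : (HSbar s F < C%:E)%E ->
  forall e, 0 < e -> exists rho sq,
    [/\ 0 < rho < e, centred_cover rho F sq & (size sq)%:R <= C / (2 * rho) `^ s].
Proof.
move=> /liminf0_lt HS_lt e e_gt0; have [rho /andP[rho_gt0 rho_lt_e]] := HS_lt e e_gt0.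
have pow_gt0 : 0 < (2 * rho) `^ s by rewrite powR_gt0// mulr_gt0.
rewrite -lte_pdivlMr// -EFinM => /ereal_inf_lt[_ [sq cov <-]]; rewrite lte_fin => /ltW.
by exists rho, sq; rewrite rho_gt0.
Qed.
End CountingBounds.

Section VanishingOnPieces.
Variables (R : realType) (n : nat) (mu : probability (Rn R n) R).
Local Notation V := 'rV[R]_n.
Local Notation mu' := (mu : set V -> \bar R).
Variables (q t s beta rho : R) (F G : set V).
Hypotheses (GF : G `<=` F) (rho_gt0 : 0 < rho) (gap : 0 < beta + t - s).

Lemma Cqt_eq0 : (forall y, G y -> mass_bound mu q beta rho y) ->
  (PSbar s F < +oo)%E -> Cqt mu' q t G = 0.
Proof.
move=> Gmb /lt_pinfty_bound[C C_gt0 /limsup0_lt[e e_gt0 Mr_lt]].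
apply/eqP; rewrite eq_le Cqt_ge0 andbT; apply/lee_addgt0Pr => eps eps_gt0; rewrite add0e.
have [th th_gt0 small] := powR_decay C_gt0 (ltr0Sn _ 1) (ltr0Sn _ 1) gap eps_gt0.
apply: (@limsup0_le _ _ _ (Num.min e (Num.min rho th))) => [|r /andP[r_gt0]].
  by rewrite !lt_min e_gt0 rho_gt0.
rewrite !lt_min => /and3P[r_lt_e r_lt_rho r_lt_th].
have pow_gt0 : 0 < (2 * r) `^ s by rewrite powR_gt0// mulr_gt0.
have Mr_le : (Mr r F <= (C / (2 * r) `^ s)%:E)%E.
  by rewrite EFinM lee_pdivlMr// ltW// Mr_lt// r_gt0.
have Mq_le : (Mq mu' q r G <= (C / (2 * r) `^ s * r `^ beta)%:E)%E.
  apply: le_trans (Mq_le_Mr (ltW r_gt0) (powR_ge0 r beta) GF _) _.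
    by move=> y Gy; apply: Gmb; rewrite ?r_gt0.
  by rewrite EFinM lee_wpmul2r// lee_fin powR_ge0.
apply: le_trans (lee_wpmul2r _ Mq_le) _; first by rewrite lee_fin powR_ge0.
by rewrite -EFinM lee_fin small// r_gt0.
Qed.

Lemma Lqt_eq0 : (forall y, G y -> mass_bound mu q beta rho y) ->
  (HSbar s F < +oo)%E -> Lqt mu' q t G = 0.
Proof.
move=> Gmb /lt_pinfty_bound[C C_gt0 HS_lt].
apply/eqP; rewrite eq_le Lqt_ge0 andbT; apply/lee_addgt0Pr => eps eps_gt0; rewrite add0e.
have [th th_gt0 small] := powR_decay C_gt0 ltr01 (ltr0Sn _ 1) gap eps_gt0.
apply: liminf0_le => e e_gt0.
have [|r [sq [/andP[r_gt0] + cov size_le]]] :=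
  HSbar_lt_cover HS_lt (e := Num.min (e / 2) (Num.min (rho / 2) (th / 2))).
  by rewrite !lt_min !divr_gt0.
rewrite !lt_min => /and3P[r_lt_e r_lt_rho r_lt_th].
exists (2 * r); first by rewrite mulr_gt0//=; lra.
have Nq_le : (Nq mu' q (2 * r) G <= ((size sq)%:R * (2 * r) `^ beta)%:E)%E.
  apply: Nq_le_cover (powR_ge0 _ _) GF cov _ => y Gy.
  by apply: Gmb; rewrite // mulr_gt0//=; lra.
apply: le_trans (lee_wpmul2r _ Nq_le) _; first by rewrite lee_fin powR_ge0.
rewrite -EFinM lee_fin; apply: le_trans (small (2 * r) _); last by rewrite mulr_gt0//=; lra.
by rewrite mul1r !ler_wpM2r ?powR_ge0.
Qed.
End VanishingOnPieces.

Lemma HSbar_finite_negligible (R : realType) (n : nat) (mu : probability (Rn R n) R)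
    (s beta rho : R) (F G : set 'rV[R]_n) :
  G `<=` F -> 0 < rho -> s < beta -> (forall y, G y -> mass_bound mu 1 beta rho y) ->
  (HSbar s F < +oo)%E -> mu.-negligible (G : set (Rn R n)).
Proof.
move=> GF rho_gt0 s_lt Gmb /lt_pinfty_bound[C C_gt0 HS_lt].
apply: small_covers_negligible => eps eps_gt0.
have gap : 0 < beta + 0 - s by rewrite addr0 subr_gt0.
have [th th_gt0 small] := powR_decay C_gt0 ltr01 ltr01 gap eps_gt0.
have [|r [sq [/andP[r_gt0 +] cov size_le]]] :=
  HSbar_lt_cover HS_lt (e := Num.min (rho / 2) (th / 2)).
  by rewrite lt_min !divr_gt0.
rewrite lt_min => /andP[r_lt_rho r_lt_th].
have [|U [mU GU muU]] := mu_cover_le (mu := mu) (powR_ge0 (2 * r) beta) GF cov.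
  move=> y Gy; have := Gmb y Gy (2 * r).
  rewrite mu_cballE epow1 ?fine_mu_cball_ge0// -mu_cballE; apply.
  by rewrite mulr_gt0//=; lra.
exists U; split => //; apply: le_trans muU _; rewrite lee_fin.
apply: le_trans (small (2 * r) _); last by rewrite mulr_gt0//=; lra.
by rewrite powRr0 !mulr1 mul1r ler_wpM2r ?powR_ge0.
Qed.

Section Refinement.
Variables (R : realType) (n : nat).
Local Notation V := 'rV[R]_n.

Lemma bounded_refinement (A : set V) (F G : nat -> set V) :
  A `<=` \bigcup_i F i -> A `<=` \bigcup_k G k ->
  exists H : nat -> set V, A `<=` \bigcup_j H j /\
    forall j, ebounded (H j) /\ exists i k, H j `<=` F i `&` G k.
Proof.
move=> AF AG; pose idx j := odflt (0, (0, 0))%N (@choice.unpickle (nat * (nat * nat))%type j).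
exists (fun j => F (idx j).1 `&` G (idx j).2.1 `&` cball 0 (idx j).2.2%:R); split.
  move=> x Ax; have [i _ Fx] := AF x Ax; have [k _ Gx] := AG x Ax.
  exists (choice.pickle (i, (k, (Num.trunc (Defs.edist 0 x)).+1))) => //.
  by rewrite /idx choice.pickleK /=; split => //; apply/ltW/truncnS_gt.
by move=> j; split; [exists 0, (idx j).2.2%:R => y [] | exists (idx j).1, (idx j).2.1 => y []].
Qed.
End Refinement.

Section MultifractalVanishing.
Variables (R : realType) (n : nat) (mu : probability (Rn R n) R).
Local Notation V := 'rV[R]_n.
Local Notation mu' := (mu : set V -> \bar R).

Lemma HS_finite_cover (s : R) (A : set V) : (HS s A < +oo)%E ->
  exists F : nat -> set V, A `<=` \bigcup_i F i /\ forall i, (HSbar s (F i) < +oo)%E.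
Proof.
move=> /ereal_inf_lt[_ [F AF <-] sum_lt]; exists F; split => // i.
by apply: le_lt_trans (term_le_nneseries _ _) sum_lt => k; exact: HSbar_ge0.
Qed.

Lemma PS_finite_cover (s : R) (A : set V) : (PS s A < +oo)%E ->
  exists F : nat -> set V, A `<=` \bigcup_i F i /\ forall i, (PSbar s (F i) < +oo)%E.
Proof.
move=> /ereal_inf_lt[_ [F AF <-] sum_lt]; exists F; split => // i.
by apply: le_lt_trans (term_le_nneseries _ _) sum_lt => k; exact: PSbar_ge0.
Qed.

Variables (q t s beta : R) (A : set V).
Hypotheses (Amb : forall x, A x -> exists2 rho, 0 < rho & mass_bound mu q beta rho x)
  (gap : 0 < beta + t - s).

Lemma Hqt_eq0 : (HS s A < +oo)%E -> Hqt mu' q t A = 0.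
Proof.
move=> /HS_finite_cover[F [AF F_fin]].
apply/eqP; rewrite eq_le Hqt_ge0 andbT; apply: ge_ereal_sup => _ [B BA <-].
have [H [BH H_piece]] := bounded_refinement (subset_trans BA AF)
  (subset_trans BA (mass_bound_cover Amb)).
apply: ge_ereal_inf; exists (\sum_(0 <= j <oo) Lqt mu' q t (H j))%E.
  by exists H => //; split => // j; case: (H_piece j).
rewrite eseries0// => j _ _; have [_ [i [k Hj_sub]]] := H_piece j.
apply: (Lqt_eq0 (F := F i) (beta := beta) (rho := k.+1%:R^-1)) => //; rewrite ?invr_gt0//.
all: by move=> y /Hj_sub[].
Qed.

Lemma Pqt_eq0 : (PS s A < +oo)%E -> Pqt mu' q t A = 0.
Proof.
move=> /PS_finite_cover[F [AF F_fin]].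
have [H [AH H_piece]] := bounded_refinement AF (mass_bound_cover Amb).
apply/eqP; rewrite eq_le Pqt_ge0 andbT.
apply: ge_ereal_inf; exists (\sum_(0 <= j <oo) Cqt mu' q t (H j))%E.
  by exists H => //; split => // j; case: (H_piece j).
rewrite eseries0// => j _ _; have [_ [i [k Hj_sub]]] := H_piece j.
apply: (Cqt_eq0 (F := F i) (beta := beta) (rho := k.+1%:R^-1)) => //; rewrite ?invr_gt0//.
all: by move=> y /Hj_sub[].
Qed.

Lemma Hqt_mul_le_HS (c : R) : 0 <= c -> (c%:E * Hqt mu' q t A <= HS s A)%E.
Proof.
move=> c_ge0; have [->|HS_fin] := eqVneq (HS s A) +oo%E; first exact: leey.
by rewrite Hqt_eq0 ?mule0 ?HS_ge0// ltey.
Qed.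

Lemma Pqt_mul_le_PS (c : R) : 0 <= c -> (c%:E * Pqt mu' q t A <= PS s A)%E.
Proof.
move=> c_ge0; have [->|PS_fin] := eqVneq (PS s A) +oo%E; first exact: leey.
by rewrite Pqt_eq0 ?mule0 ?PS_ge0// ltey.
Qed.
End MultifractalVanishing.

Section Dimension.
Variables (R : realType) (n : nat) (mu : probability (Rn R n) R).
Local Notation V := 'rV[R]_n.
Local Notation mu' := (mu : set V -> \bar R).

Lemma HS_le_PS (s : R) (E : set V) : (HS s E <= PS s E)%E.
Proof.
apply: le_ereal_inf_tmp => _ [F EF <-].
apply: (@le_trans _ _ (\sum_(0 <= i <oo) HSbar s (F i))%E).
  by apply: ereal_inf_lbound; exists F.
apply: lee_nneseries => i _ => [_|]; first exact: HSbar_ge0.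
apply: liminf0_le_limsup0 => r r_gt0; rewrite lee_wpmul2r ?lee_fin ?powR_ge0//.
exact/Nr_le_Mr/ltW.
Qed.
Lemma HS_eq0_Elow_null (s a : R) (A : set V) : s < a -> measurable (A : set (Rn R n)) ->
  A `<=` Elow mu' a -> HS s A = 0 -> mu' A = 0.
Proof.
move=> s_lt_a mA AE HS0; have eta_gt0 : 0 < (a - s) / 2 by rewrite divr_gt0// subr_gt0.
have [|F [AF F_fin]] := HS_finite_cover (s := s) (A := A); first by rewrite HS0 ltry.
have [H [AH H_piece]] := bounded_refinement AF (mass_bound_cover (fun x Ax =>
  Elow_mass_bound ler01 eta_gt0 (AE x Ax))).
apply: (measure_negligible mA); apply: (@negligibleS _ _ _ _ (\bigcup_j (H j : set (Rn R n))) _ AH).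
apply: negligible_bigcup => j.
have [_ [i [k Hj_sub]]] := H_piece j.
apply: (HSbar_finite_negligible (s := s) (beta := (a - (a - s) / 2) * 1) (F := F i)
  (rho := k.+1%:R^-1)) => //.
- by move=> y /Hj_sub[].
- by rewrite mulr1; lra.
- by move=> y /Hj_sub[].
Qed.

Lemma lowdimMB_ge (a : R) (A : set V) : measurable (A : set (Rn R n)) ->
  A `<=` Elow mu' a -> (0 < mu' A)%E -> (a%:E <= lowdimMB A)%E.
Proof.
move=> mA AE muA_gt0; apply: le_ereal_inf_tmp => _ [s [_ HS0] <-].
rewrite lee_fin leNgt; apply/negP => s_lt_a.
by move: muA_gt0; rewrite (HS_eq0_Elow_null s_lt_a mA AE HS0) ltxx.
Qed.

Lemma updimMB_ge (a : R) (A : set V) : measurable (A : set (Rn R n)) ->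
  A `<=` Elow mu' a -> (0 < mu' A)%E -> (a%:E <= updimMB A)%E.
Proof.
move=> mA AE muA_gt0; apply: le_ereal_inf_tmp => _ [s [_ PS0] <-].
have HS0 : HS s A = 0 by apply/eqP; rewrite eq_le HS_ge0 andbT -PS0 HS_le_PS.
rewrite lee_fin leNgt; apply/negP => s_lt_a.
by move: muA_gt0; rewrite (HS_eq0_Elow_null s_lt_a mA AE HS0) ltxx.
Qed.
End Dimension.

Lemma exists_pos_mul_norm_lt (R : realType) (q delta : R) : 0 < delta ->
  exists2 eta, 0 < eta & eta * `|q| < delta.
Proof.
move=> delta_gt0; exists (delta / (`|q| + 1)); first by rewrite divr_gt0// ltr_pwDr.
by rewrite mulrAC ltr_pdivrMr ?ltr_pwDr// ltr_pM2l// ltrDl.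
Qed.

Unset Implicit Arguments.

Theorem lemma3p5 (R : realType) (n : nat) (mu : probability (Rn R n) R)
  (alpha q t delta : R) :
  compact (supp (mu : set 'rV[R]_n -> \bar R)) ->
  0 <= alpha -> 0 < delta -> delta <= alpha * q + t ->
  [/\
   (* (1)(a) *)
   (q <= 0 -> forall A : set (Rn R n), measurable A ->
      (A : set 'rV[R]_n) `<=` Eup mu alpha ->
      ((2 `^ (alpha * q - delta))%:E * Pqt mu q t A
         <= PS (alpha * q + t - delta) A)%E),
   (* (1)(b) *)
   (0 <= q ->
      (forall A : set (Rn R n), measurable A ->
        (A : set 'rV[R]_n) `<=` Elow mu alpha ->
        ((2 `^ (alpha * q - delta))%:E * Pqt mu q t A
           <= PS (alpha * q + t - delta) A)%E) /\
      (forall A : set (Rn R n), measurable A ->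
        (A : set 'rV[R]_n) `<=` Elow mu alpha -> (0 < mu A)%E ->
        (alpha%:E <= updimMB A)%E)),
   (* (2)(a) *)
   (q <= 0 -> forall A : set (Rn R n), measurable A ->
      (A : set 'rV[R]_n) `<=` Eup mu alpha ->
      ((2 `^ (alpha * q - delta))%:E * Hqt mu q t A
         <= HS (alpha * q + t - delta) A)%E) &
   (* (2)(b) *)
   (0 <= q ->
      (forall A : set (Rn R n), measurable A ->
        (A : set 'rV[R]_n) `<=` Elow mu alpha ->
        ((2 `^ (alpha * q - delta))%:E * Hqt mu q t A
           <= HS (alpha * q + t - delta) A)%E) /\
      (forall A : set (Rn R n), measurable A ->
        (A : set 'rV[R]_n) `<=` Elow mu alpha -> (0 < mu A)%E ->
        (alpha%:E <= lowdimMB A)%E))].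
Proof.
move=> _ _ delta_gt0 _.
have [eta eta_gt0 eta_q] := exists_pos_mul_norm_lt q delta_gt0.
have c_ge0 : 0 <= 2 `^ (alpha * q - delta) := powR_ge0 _ _.
have up_gap : q <= 0 -> 0 < (alpha + eta) * q + t - (alpha * q + t - delta).
  by move=> q_le0; move: eta_q; rewrite ler0_norm//; nra.
have low_gap : 0 <= q -> 0 < (alpha - eta) * q + t - (alpha * q + t - delta).
  by move=> q_ge0; move: eta_q; rewrite ger0_norm//; nra.
have Eup_mb (q_le0 : q <= 0) A (AE : A `<=` Eup mu alpha) x (Ax : A x) :=
  Eup_mass_bound q_le0 eta_gt0 (AE x Ax).
have Elow_mb (q_ge0 : 0 <= q) A (AE : A `<=` Elow mu alpha) x (Ax : A x) :=
  Elow_mass_bound q_ge0 eta_gt0 (AE x Ax).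
split=> [q_le0 A _ AE|q_ge0|q_le0 A _ AE|q_ge0].
- exact: (Pqt_mul_le_PS (Eup_mb q_le0 A AE) (up_gap q_le0) c_ge0).
- split=> [A _ AE|]; last exact: updimMB_ge.
  exact: (Pqt_mul_le_PS (Elow_mb q_ge0 A AE) (low_gap q_ge0) c_ge0).
- exact: (Hqt_mul_le_HS (Eup_mb q_le0 A AE) (up_gap q_le0) c_ge0).
- split=> [A _ AE|]; last exact: lowdimMB_ge.
  exact: (Hqt_mul_le_HS (Elow_mb q_ge0 A AE) (low_gap q_ge0) c_ge0).
Qed.
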